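(* Let $\Pi$ and $P$ be node-edge-checkable problems. Then: 1. $\Pi\xrightarrow{0}\tau_P(\tau_P(\Pi))$; 2. $\tau_P(\Pi)$ and $\tau_P(\tau_P(\tau_P(\Pi)))$ are equivalent, i.e., each is a relaxation of the other.
   Context: Fix $\Delta$. A node-edge-checkable problem $\Pi=(\Sigma_\Pi,\mathcal{N}_\Pi,\mathcal{E}_\Pi)$ has a finite label set, a node constraint $\mathcal{N}_\Pi$ (a set of cardinality-$\Delta$ multisets over $\Sigma_\Pi$) and an edge constraint $\mathcal{E}_\Pi$ (a set of cardinality-$2$ multisets). Relaxation. $\Pi\xrightarrow{0}\Pi'$ means there is a map $f$ with the following properties. For every $C=L_1\dots L_\Delta\in\mathcal{N}_\Pi$ and every $j$, $f$ assigns a label $f(C,j)\in\Sigma_{\Pi'}$. The map must satisfy: - $f(C,1)\dots f(C,\Delta)\in\mathcal{N}_{\Pi'}$; - whenever the $j$-th entry of $C$ and the $j'$-th entry of $C'$ form an element of $\mathcal{E}_\Pi$, then $f(C,j)f(C',j')\in\mathcal{E}_{\Pi'}$. The problem $\mathrm{R}^*(P)$ is defined as follows. - Labels are the nonempty subsets of $\Sigma_P$. - Node configurations are the $S_1\dots S_\Delta$ admitting $L_i\in S_i$ with $L_1\dots L_\Delta\in\mathcal{N}_P$. - Edge configurations are the $S_1S_2$ with $L_1L_2\in\mathcal{E}_P$ for all $L_1\in S_1,L_2\in S_2$. The tripotent input $\tau_P(\Pi)$ is defined as follows. - Labels are all functions $\Sigma_\Pi\to\Sigma_{\mathrm{R}^*(P)}$.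 - $f_1\dots f_\Delta$ is a node configuration iff $f_1(L_1)\dots f_\Delta(L_\Delta)\in\mathcal{N}_{\mathrm{R}^*(P)}$ for all $L_1\dots L_\Delta\in\mathcal{N}_\Pi$. - $f_1f_2$ is an edge configuration iff $f_1(L_1)f_2(L_2)\in\mathcal{E}_{\mathrm{R}^*(P)}$ for all $L_1L_2\in\mathcal{E}_\Pi$. *)

From HB Require Import structures.
From mathcomp Require Import all_boot.
Set Implicit Arguments. Unset Strict Implicit. Unset Printing Implicit Defensive.

(* Multisets of cardinality
   Delta are represented by Delta-tuples (ordered), and the node constraint
   is a predicate on tuples; faithfulness to the multiset reading is ensured
   by the well-formedness predicate [ne_wf] (closure under permutation,
   symmetry of the edge relation). *)
Record ne_problem (Delta : nat) := NEProblem {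
  lab : finType;
  nodeC : pred (Delta.-tuple lab);
  edgeC : rel lab }.

Arguments lab {Delta}.
Arguments nodeC {Delta}.
Arguments edgeC {Delta}.

Definition ne_wf Delta (Pi : ne_problem Delta) : Prop :=
  (forall C C' : Delta.-tuple (lab Pi), perm_eq C C' -> nodeC Pi C = nodeC Pi C')
  /\ (forall a b, edgeC Pi a b = edgeC Pi b a).

Definition relax0 Delta (Pi Pi' : ne_problem Delta) : Prop :=
  exists f : {C : Delta.-tuple (lab Pi) | nodeC Pi C} -> 'I_Delta -> lab Pi',
    (forall C, nodeC Pi' [tuple f C j | j < Delta]) /\
    (forall (C C' : {C : Delta.-tuple (lab Pi) | nodeC Pi C}) (j j' : 'I_Delta),
        edgeC Pi (tnth (sval C) j) (tnth (sval C') j') ->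
        edgeC Pi' (f C j) (f C' j')).

Definition ne_equiv Delta (Pi Pi' : ne_problem Delta) : Prop :=
  relax0 Pi Pi' /\ relax0 Pi' Pi.

Definition Rstar_lab Delta (P : ne_problem Delta) : finType :=
  {S : {set lab P} | S != set0}.

Definition Rstar Delta (P : ne_problem Delta) : ne_problem Delta :=
  @NEProblem Delta (Rstar_lab P)
    (fun S => [exists L : Delta.-tuple (lab P),
                 [forall i, tnth L i \in sval (tnth S i)] && nodeC P L])
    (fun S1 S2 => [forall L1 in sval S1, forall L2 in sval S2, edgeC P L1 L2]).

Definition tau Delta (P Pi : ne_problem Delta) : ne_problem Delta :=
  @NEProblem Delta {ffun lab Pi -> lab (Rstar P)}
    (fun fs => [forall L : Delta.-tuple (lab Pi),
                 nodeC Pi L ==>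
                 nodeC (Rstar P) [tuple (tnth fs i) (tnth L i) | i < Delta]])
    (fun f1 f2 => [forall L1, forall L2,
                 edgeC Pi L1 L2 ==> edgeC (Rstar P) (f1 L1) (f2 L2)]).

From mathcomp Require Import all_boot.
Set Implicit Arguments.
Unset Strict Implicit.
Unset Printing Implicit Defensive.

(* Label maps preserving node and edge constraints are relaxations, and tau_P
   turns them around by precomposition.  The evaluation map L |-> (f |-> f L)
   is such a map from Pi to tau_P (tau_P Pi); applied to tau_P Pi it gives one
   direction of the equivalence, and precomposing with it gives the other. *)

Section Homomorphisms.

Variable Delta : nat.
Implicit Types X Y P : ne_problem Delta.

Definition ne_hom X Y (g : lab X -> lab Y) : Prop :=
  (forall L, nodeC X L -> nodeC Y (map_tuple g L)) /\
  (forall a b, edgeC X a b -> edgeC Y (g a) (g b)).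

Lemma relax0_hom X Y (g : lab X -> lab Y) : ne_hom g -> relax0 X Y.
Proof.
move=> [g_node g_edge]; exists (fun C j => g (tnth (sval C) j)); split.
  move=> [C nodeC_C] /=; have := g_node C nodeC_C.
  by congr (nodeC _ _); apply: eq_from_tnth => i; rewrite tnth_map tnth_mktuple.
by move=> C C' j j'; apply: g_edge.
Qed.

Definition tau_eval P X (L : lab X) : lab (tau P (tau P X)) :=
  [ffun f : lab (tau P X) => f L].

Lemma tau_eval_hom P X : ne_hom (tau_eval P (X := X)).
Proof.
split=> [L nodeC_L | a b edgeC_ab].
  apply/forallP => fs; apply/implyP => /forallP /(_ L) /implyP /(_ nodeC_L).
  congr (nodeC _ _); apply: eq_from_tnth => i.
  by rewrite !tnth_mktuple tnth_map ffunE.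
apply/forallP => f1; apply/forallP => f2; apply/implyP.
by move=> /forallP /(_ a) /forallP /(_ b) /implyP /(_ edgeC_ab); rewrite !ffunE.
Qed.

Definition tau_pull P X Y (g : lab X -> lab Y) (h : lab (tau P Y)) : lab (tau P X) :=
  [ffun L => h (g L)].
Arguments tau_pull P {X Y} g h.

Lemma tau_pull_hom P X Y (g : lab X -> lab Y) :
  ne_hom g -> ne_hom (tau_pull P g).
Proof.
move=> [g_node g_edge]; split=> [hs nodeC_hs | h1 h2 edgeC_h12].
  apply/forallP => L; apply/implyP => nodeC_L.
  move: nodeC_hs => /forallP /(_ (map_tuple g L)) /implyP /(_ (g_node L nodeC_L)).
  congr (nodeC _ _); apply: eq_from_tnth => i.
  by rewrite !tnth_mktuple !tnth_map ffunE.
apply/forallP => a; apply/forallP => b; apply/implyP => edgeC_ab.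
move: edgeC_h12 => /forallP /(_ (g a)) /forallP /(_ (g b)) /implyP.
by move=> /(_ (g_edge a b edgeC_ab)); rewrite /tau_pull !ffunE.
Qed.

End Homomorphisms.

Theorem mainTheorem11 (Delta : nat) (Pi P : ne_problem Delta) :
  ne_wf Pi -> ne_wf P ->
  relax0 Pi (tau P (tau P Pi)) /\
  ne_equiv (tau P Pi) (tau P (tau P (tau P Pi))).
Proof.
move=> _ _; split; first exact: relax0_hom (tau_eval_hom P Pi).
split; first exact: relax0_hom (tau_eval_hom P (tau P Pi)).
exact: relax0_hom (tau_pull_hom P (tau_eval_hom P Pi)).
Qed.
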